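(* Let $u$ be a symmetric decreasing function on $\mathbb{T}$, and let $h,\bar h$ be pdfs such that $\bar h$ is more focused than $h$. Then for all $r\in\mathbb{T}$, $$\int h(x-r)u(x)\,dx\le\int\bar h(x)u(x)\,dx.$$
   Context: $\mathbb{T}=\mathbb{R}/\mathbb{Z}$, identified with $[-\tfrac12,\tfrac12)$; integrals are over $\mathbb{T}$. A pdf is a nonnegative function in $L^2(\mathbb{T})$ with integral 1. A function $u$ is symmetric decreasing if $u(x)=u(-x)$ and $u(x)\ge u(y)$ for all $0\le x\le y$ (here $y\le\tfrac12$). A function $\bar h$ is more focused than $h$ if for all $z\in[0,\tfrac12]$ and all $r\in\mathbb{T}$, $\int_{r-z}^{r+z}h\le\int_{-z}^{z}\bar h$. *)

From HB Require Import structures.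
From mathcomp Require Import all_boot all_order all_algebra.
From mathcomp Require Import all_classical all_reals all_analysis.
Unset Printing Implicit Defensive.
Import Order.TTheory GRing.Theory Num.Theory.
Local Open Scope classical_set_scope.
Local Open Scope ring_scope.

(* T = R/Z: functions on T are 1-periodic functions R -> R;
   points of T are represented by reals in [-1/2, 1/2). *)
Definition Tset (R : realType) : set R := `[(- (1/2)) : R, 1/2[%classic.

Definition periodic1 {R : realType} (f : R -> R) : Prop :=
  forall x, f (x + 1) = f x.

Definition intT {R : realType} (f : R -> R) : \bar R :=
  (\int[(@lebesgue_measure R : set R -> \bar R)]_(x in Tset R) (f x)%:E)%E.

Definition intI {R : realType} (a b : R) (f : R -> R) : \bar R :=
  (\int[(@lebesgue_measure R : set R -> \bar R)]_(x in `[a, b]%classic) (f x)%:E)%E.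

Definition pdf {R : realType} (h : R -> R) : Prop :=
  [/\ periodic1 h,
      measurable_fun setT h,
      (forall x, 0 <= h x),
      (intT (fun x => (h x ^+ 2)%R) < +oo)%E &
      intT h = 1%E].

Definition symmetric_decreasing {R : realType} (u : R -> R) : Prop :=
  [/\ periodic1 u,
      (forall x, u x = u (- x)) &
      (forall x y, 0 <= x -> x <= y -> y <= 1/2 -> u y <= u x)].

Definition more_focused {R : realType} (hbar h : R -> R) : Prop :=
  forall z r, 0 <= z -> z <= 1/2 -> r \in Tset R ->
    (intI (r - z) (r + z) h <= intI (- z) z hbar)%E.

From HB Require Import structures.
From mathcomp Require Import all_boot all_order all_algebra.
From mathcomp Require Import all_classical all_reals all_analysis.
From mathcomp Require Import measurable_realfun lra.
Import Order.TTheory GRing.Theory Num.Theory.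
Local Open Scope classical_set_scope.
Local Open Scope ring_scope.

(* Both h(. - r) and hbar are probability densities on T, so subtracting
   m = u(1/2) from u changes both sides by m, and it suffices to compare their
   integrals against the bounded nonnegative function W = u - m.  As u is
   symmetric decreasing, each superlevel set {x in T | W x > t} lies between
   ]-z, z[ and [-z, z] for some z; by periodicity and the focusing hypothesis its
   h(. - r)-mass is at most its hbar-mass.  Approximating W from below, within
   e, by the staircase e * sum_k 1{W > k e} turns these level-set inequalities
   into the inequality for W, up to an error that vanishes with e. *)

Section stair.
Context {R : realType}.
Implicit Types (e x y : R) (n : nat).

(* For [e > 0]: the largest [k e < y] with [k <= n], or [0] if there is none. *)
Definition stair e n y : R := e * \sum_(k < n) ((k.+1)%:R * e < y)%R%:R.

Lemma stairS e n y :
  stair e n.+1 y = stair e n y + e * ((n.+1)%:R * e < y)%R%:R.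
Proof. by rewrite /stair big_ord_recr mulrDr. Qed.

Lemma stair_ge0 e n y : 0 <= e -> 0 <= stair e n y.
Proof. by move=> e0; rewrite mulr_ge0// sumr_ge0// => k _; rewrite ler0n. Qed.

Lemma stair_le_mul e n y : 0 <= e -> stair e n y <= n%:R * e.
Proof.
move=> e0; rewrite /stair mulrC ler_wpM2r//.
rewrite -[n in n%:R](card_ord n) -sumr_const ler_sum// => k _.
by case: ltrP.
Qed.

Lemma stair_full e n y : 0 <= e -> n%:R * e < y -> stair e n y = n%:R * e.
Proof.
move=> e0 ney; rewrite /stair (eq_bigr (fun=> 1)) ?sumr_const ?card_ord 1?mulrC//.
move=> k _; rewrite (le_lt_trans _ ney)//.
by rewrite ler_wpM2r// ler_nat ltn_ord.
Qed.

Lemma stair_le e n y : 0 <= e -> 0 <= y -> stair e n y <= y.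
Proof.
move=> e0 y0; elim: n => [|n IH]; first by rewrite /stair big_ord0 mulr0.
rewrite stairS; case: ltrP => [ney|_]; last by rewrite mulr0 addr0.
by rewrite mulr1 (le_trans _ (ltW ney))// mulrSr mulrDl mul1r lerD2r stair_le_mul.
Qed.

Lemma stair_ge e n y : 0 <= e -> y <= n%:R * e -> y <= stair e n y + e.
Proof.
move=> e0; elim: n => [|n IH] yn.
  by rewrite (le_trans yn)// mul0r addr_ge0 ?stair_ge0.
rewrite stairS; case: (lerP y (n%:R * e)) => [/IH|ny].
  by move/le_trans; apply; rewrite lerD2r lerDl mulr_ge0.
rewrite stair_full// (le_trans yn)// mulrSr mulrDl mul1r -addrA lerD2l.
by rewrite lerDr mulr_ge0// ler0n.
Qed.

Lemma nondecreasing_stair e n : 0 <= e -> {homo stair e n : x y / x <= y}.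
Proof.
move=> e0 x y xy; rewrite ler_wpM2l// ler_sum// => k _.
by case: ltrP => // kx; rewrite (lt_le_trans kx xy).
Qed.

End stair.

Lemma bounded_between {T : Type} {R : realType} {A : set T} {f : T -> R} {a b : R} :
  (forall x, A x -> a <= f x <= b) -> [bounded f x | x in A].
Proof.
move=> fab; exists (`|a| + `|b|); split; first by rewrite num_real.
move=> M abM x Ax /=; rewrite (le_trans _ (ltW abM))//.
have /andP[ax xb] := fab x Ax; rewrite ler_norml.
have := ler_norm b; have := lerNnormlW (lexx `|a|).
have := normr_ge0 a; have := normr_ge0 b.
by move=> *; apply/andP; split; lra.
Qed.

Section integral_offset.
Context {d : measure_display} {T : measurableType d} {R : realType}.
Context (mu : {measure set T -> \bar R}) {D : set T}.
Hypothesis mD : measurable D.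
Local Open Scope ereal_scope.

Lemma ge0_integrable (f : T -> R) : measurable_fun D f ->
  (forall x, D x -> 0 <= f x)%R -> \int[mu]_(x in D) (f x)%:E < +oo ->
  mu.-integrable D (EFin \o f).
Proof.
move=> mf f0 fioo; apply/integrableP; split; first exact/measurable_EFinP.
rewrite (eq_integral (fun x => (f x)%:E))// => x /set_mem Dx.
by rewrite /= ger0_norm ?f0.
Qed.

Lemma integral_mul_offset (f v : T -> R) (m : R) :
  mu.-integrable D (EFin \o f) -> measurable_fun D v -> [bounded v x | x in D] ->
  \int[mu]_(x in D) (f x * v x)%:E =
  \int[mu]_(x in D) (f x * (v x - m))%:E + m%:E * \int[mu]_(x in D) (f x)%:E.
Proof.
move=> fi mv vb.
have fvi : mu.-integrable D (EFin \o (fun x => f x * v x)%R).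
  by apply: eq_integrable mD _ _ _ (integrableMl mD fi mv vb) => x _; rewrite /= EFinM.
rewrite [in RHS](eq_integral (fun x => (f x * v x)%:E - m%:E * (f x)%:E)); last first.
  by move=> x _; rewrite -EFinM -EFinB mulrBr (mulrC m).
rewrite (integralB mD fvi (integrableZl mD m fi)) integralZl// subeK//.
by rewrite fin_numM// integrable_fin_num.
Qed.

End integral_offset.

Section layer_cake.
Context {d : measure_display} {T : measurableType d} {R : realType}.
Context (mu : {measure set T -> \bar R}) {D : set T} {W : T -> R}.
Hypotheses (mD : measurable D) (mW : measurable_fun D W).
Local Open Scope ereal_scope.

Lemma measurable_stair e n : (0 <= e)%R -> measurable_fun D (stair e n \o W).
Proof.
move=> e0; apply: measurableT_comp mW.
exact: nondecreasing_measurable measurableT (nondecreasing_stair e n e0).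
Qed.

Lemma integral_stair (f : T -> R) e n : (0 <= e)%R ->
  measurable_fun D f -> (forall x, D x -> (0 <= f x)%R) ->
  \int[mu]_(x in D) (f x * stair e n (W x))%:E =
  \sum_(k < n) e%:E * \int[mu]_(x in D `&` [set x | (k.+1)%:R * e < W x]%R) (f x)%:E.
Proof.
move=> e0 mf f0.
have mlevel (c : R) : measurable_fun D (fun x => (f x * (c < W x)%R%:R)%R).
  have mind : measurable_fun [set: R] (fun y => (c < y)%R%:R : R).
    apply: nondecreasing_measurable measurableT _ => x y xy.
    by case: ltrP => // cx; rewrite (lt_le_trans cx xy).
  exact: measurable_funM mf (measurableT_comp mind mW).
under eq_integral => x _ do
  rewrite /stair mulrCA !mulr_sumr -sumEFin.
rewrite ge0_integral_sum//; last 2 first.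
- move=> k; apply/measurable_EFinP.
  by apply: measurable_funM => //; exact: measurable_cst.
- by move=> k x Dx; rewrite lee_fin !mulr_ge0 ?f0 ?ler0n.
apply: eq_bigr => k _; under eq_integral do rewrite EFinM.
rewrite ge0_integralZl//; last 2 first.
- exact/measurable_EFinP.
- by move=> x Dx; rewrite lee_fin mulr_ge0 ?f0 ?ler0n.
congr (_ * _); rewrite integral_mkcondr; apply: eq_integral => x _.
rewrite patchE; case: ifPn => [/set_mem/= ->|/negP xN]; first by rewrite mulr1.
suff -> : ((k.+1)%:R * e < W x)%R = false by rewrite mulr0.
by apply/negbTE/negP => lt; apply: xN; exact: mem_set.
Qed.

Lemma integral_le_stairD (f : T -> R) e n : (0 <= e)%R ->
  measurable_fun D f -> (forall x, D x -> (0 <= f x)%R) ->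
  (forall x, D x -> 0 <= W x <= n%:R * e)%R ->
  \int[mu]_(x in D) (f x * W x)%:E <=
  \int[mu]_(x in D) (f x * stair e n (W x))%:E + e%:E * \int[mu]_(x in D) (f x)%:E.
Proof.
move=> e0 mf f0 Wn.
have mfst : measurable_fun D (fun x => f x * stair e n (W x))%R.
  exact: measurable_funM mf (measurable_stair e n e0).
rewrite -ge0_integralZl//; last exact/measurable_EFinP.
have mfe : measurable_fun D (fun x => e%:E * (f x)%:E).
  by apply: emeasurable_funM => //; exact/measurable_EFinP.
rewrite -ge0_integralD//; last 3 first.
- by move=> x Dx; rewrite lee_fin mulr_ge0 ?f0 ?stair_ge0.
- exact/measurable_EFinP.
- by move=> x Dx; rewrite -EFinM lee_fin mulr_ge0 ?f0.
apply: ge0_le_integral => //.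
- by move=> x Dx; have /andP[W0 _] := Wn x Dx; rewrite lee_fin mulr_ge0 ?f0.
- exact/measurable_EFinP/measurable_funM.
- by apply: emeasurable_funD => //; exact/measurable_EFinP.
move=> x Dx; have /andP[_ Wne] := Wn x Dx.
by rewrite -EFinM -EFinD lee_fin (mulrC e) -mulrDr ler_wpM2l ?f0// stair_ge.
Qed.

Lemma integral_stair_le (g : T -> R) e n : (0 <= e)%R ->
  measurable_fun D g -> (forall x, D x -> (0 <= g x)%R) ->
  (forall x, D x -> 0 <= W x)%R ->
  \int[mu]_(x in D) (g x * stair e n (W x))%:E <= \int[mu]_(x in D) (g x * W x)%:E.
Proof.
move=> e0 mg g0 W0; apply: ge0_le_integral => //.
- by move=> x Dx; rewrite lee_fin mulr_ge0 ?g0 ?stair_ge0.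
- exact/measurable_EFinP/measurable_funM/(measurable_stair e n e0).
- exact/measurable_EFinP/measurable_funM.
by move=> x Dx; rewrite lee_fin ler_wpM2l ?g0// stair_le ?W0.
Qed.

Theorem le_integral_superlevel (f g : T -> R) (M : R) :
  measurable_fun D f -> measurable_fun D g ->
  (forall x, D x -> 0 <= f x)%R -> (forall x, D x -> 0 <= g x)%R ->
  \int[mu]_(x in D) (f x)%:E < +oo ->
  (forall x, D x -> 0 <= W x <= M)%R ->
  (forall t, \int[mu]_(x in D `&` [set x | t < W x]%R) (f x)%:E <=
             \int[mu]_(x in D `&` [set x | t < W x]%R) (g x)%:E) ->
  \int[mu]_(x in D) (f x * W x)%:E <= \int[mu]_(x in D) (g x * W x)%:E.
Proof.
move=> mf mg f0 g0 fioo WM fg; apply/lee_addgt0Pr => eps eps0.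
have If0 : 0 <= \int[mu]_(x in D) (f x)%:E.
  by apply: integral_ge0 => x Dx; rewrite lee_fin f0.
have IfE : \int[mu]_(x in D) (f x)%:E = (fine (\int[mu]_(x in D) (f x)%:E))%:E.
  by rewrite fineK// ge0_fin_numE.
set F := fine _ in IfE; have F0 : (0 <= F)%R by rewrite -lee_fin -IfE.
pose e := (eps / (F + 1))%R; have e0 : (0 < e)%R by rewrite divr_gt0 // ltr_wpDl.
pose n := (Num.truncn (M / e)).+1.
have Mn : (M <= n%:R * e)%R by rewrite -ler_pdivrMr// ltW// truncnS_gt.
apply: le_trans (integral_le_stairD f e n (ltW e0) mf f0 _) _.
  by move=> x Dx; have /andP[-> WxM] := WM x Dx; rewrite (le_trans WxM).
rewrite IfE -EFinM leeD//; last first.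
  by rewrite lee_fin /e mulrAC ler_pdivrMr ?ltr_wpDl// ler_pM2l// lerDl.
apply: le_trans (integral_stair_le g e n (ltW e0) mg g0 _); last first.
  by move=> x Dx; have /andP[] := WM x Dx.
rewrite !integral_stair ?(ltW e0)//; apply: lee_sum => k _.
by rewrite lee_wpmul2l ?lee_fin ?(ltW e0).
Qed.

End layer_cake.

(* [intT] and [intI] integrate [lebesgue_measure] as a bare function on the
   default measurable structure of [R], where no measure instance is known for
   it; [lebesgueR] is the same function declared as a measure there. *)
Definition lebesgueR {R : realType} : set R -> \bar R := lebesgue_measure.

Section lebesgueR_measure.
Context {R : realType}.
Let lebesgueR0 : @lebesgueR R set0 = 0%E. Proof. exact: measure0. Qed.
Let lebesgueR_ge0 (A : set R) : (0 <= @lebesgueR R A)%E.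
Proof. exact: measure_ge0. Qed.
Let lebesgueR_sigma_additive : semi_sigma_additive (@lebesgueR R).
Proof. exact: (@measure_semi_sigma_additive _ _ _ (@lebesgue_measure R)). Qed.
HB.instance Definition _ := isMeasure.Build _ R R (@lebesgueR R)
  lebesgueR0 lebesgueR_ge0 lebesgueR_sigma_additive.
End lebesgueR_measure.

Section real_line.
Context {R : realType}.
Local Notation mu := (@lebesgueR R).
Local Open Scope ereal_scope.

Lemma intTE (h : R -> R) : intT h = \int[mu]_(x in Tset R) (h x)%:E.
Proof. by []. Qed.

Lemma measurable_shift (c : R) : measurable_fun [set: R] (fun x => x + c)%R.
Proof. exact: measurable_funD. Qed.

Lemma lebesgueR_shift (c : R) (A : set R) : measurable A ->
  mu ((fun x => x + c)%R @^-1` A) = mu A.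
Proof.
move=> mA; apply/esym.
change (lebesgue_measure A = pushforward lebesgue_measure
  ((fun x => x + c)%R : _ -> measurableTypeR R) A).
apply: lebesgue_measure_unique; [exact: measurable_funD| |exact: mA].
move=> mshift _ [[a b]] _ <-.
change (lebesgue_measure `]a, b] =
  lebesgue_measure ((fun x => x + c)%R @^-1` `]a, b]%classic)).
have -> : (fun x => x + c)%R @^-1` `]a, b]%classic = `](a - c)%R, (b - c)%R]%classic.
  by apply/seteqP; split => x /=; rewrite !in_itv/= ltrBlDr lerBrDr.
rewrite !lebesgue_measure_itv/= !lte_fin ltrD2r.
by case: ifP => // _; congr EFin; lra.
Qed.

Lemma ge0_integral_shift (c : R) (D : set R) (f : R -> R) :
  measurable D -> measurable_fun D f -> (forall x, D x -> (0 <= f x)%R) ->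
  \int[mu]_(x in (fun x => x + c)%R @^-1` D) (f (x + c)%R)%:E =
  \int[mu]_(x in D) (f x)%:E.
Proof.
move=> mD mf f0.
rewrite -(ge0_integral_pushforward (measurable_shift c) mu (f := fun y => (f y)%:E) mD);
  last 2 first.
- exact/measurable_EFinP.
- by move=> x /set_mem Dx; rewrite lee_fin f0.
apply: eq_measure_integral; first exact: measurable_shift.
by move=> mshift A mA _; exact: lebesgueR_shift.
Qed.

Lemma ge0_integral_itv_shift (c a b : R) (b0 b1 : bool) (f : R -> R) :
  measurable_fun [set: R] f -> (forall x, (0 <= f x)%R) ->
  \int[mu]_(x in [set` Interval (BSide b0 a) (BSide b1 b)]) (f (x + c)%R)%:E =
  \int[mu]_(x in [set` Interval (BSide b0 (a + c)%R) (BSide b1 (b + c)%R)]) (f x)%:E.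
Proof.
move=> mf f0; rewrite -[RHS](ge0_integral_shift c)//; last exact: measurable_funS mf.
congr integral; apply/seteqP; split => x /=; rewrite !in_itv/=;
  by case: b0; case: b1; rewrite /= ?lerD2r ?ltrD2r.
Qed.

Lemma TsetE (x : R) : Tset R x = (- (1/2) <= x < 1/2)%R.
Proof. by rewrite /Tset/= in_itv. Qed.

Lemma in_Tset (x : R) : (x \in Tset R) = (- (1/2) <= x < 1/2)%R.
Proof. by apply/idP/idP => [/set_mem|?]; rewrite ?TsetE// mem_set ?TsetE. Qed.

Lemma measurable_Tset : measurable (Tset R).
Proof. exact: measurable_itv. Qed.

Lemma Tset_norm_le (x : R) : Tset R x -> (`|x| <= 1/2)%R.
Proof. by rewrite TsetE ler_norml => /andP[-> /ltW ->]. Qed.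

Lemma disjoint_itv_adjacent (a b c : R) (b0 b1 b2 : bool) :
  [disjoint [set` Interval (BSide b0 a) (BSide b1 b)] &
            [set` Interval (BSide b1 b) (BSide b2 c)]].
Proof.
apply/disj_setPS => x [] /=; rewrite !in_itv/= => /andP[_ xb] /andP[bx _].
by case: b1 xb bx => /= xb bx; lra.
Qed.

Lemma ge0_integral_Tset_periodic1 (h : R -> R) (c : R) :
  periodic1 h -> measurable_fun [set: R] h -> (forall x, (0 <= h x)%R) ->
  (0 <= c <= 1)%R -> \int[mu]_(x in Tset R) (h (x + c)%R)%:E = intT h.
Proof.
move=> hp mh h0 /andP[c0 c1].
have mhE : measurable_fun [set: R] (EFin \o h) by exact/measurable_EFinP.
rewrite intTE /Tset ge0_integral_itv_shift//.
rewrite (@itv_bndbnd_setU _ _ _ (BLeft (1/2)%R)) ?bnd_simp; [|lra|lra].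
rewrite ge0_integral_setU//; [|exact: measurable_funS mhE|
  by move=> x _; rewrite lee_fin|exact: disjoint_itv_adjacent].
rewrite [in RHS](@itv_bndbnd_setU _ _ _ (BLeft (- (1/2) + c)%R)) ?bnd_simp; [|lra|lra].
rewrite ge0_integral_setU//; [|exact: measurable_funS mhE|
  by move=> x _; rewrite lee_fin|exact: disjoint_itv_adjacent].
rewrite addeC; congr (_ + _).
rewrite [RHS](eq_integral (fun x : R => (h (x + 1)%R)%:E)); last first.
  by move=> x _; rewrite hp.
rewrite ge0_integral_itv_shift//.
have -> : (- (1/2) + 1 = 1/2 :> R)%R by lra.
by have -> : (- (1/2) + c + 1 = 1/2 + c :> R)%R by lra.
Qed.

Lemma ge0_integral_Tset_periodic1_shift (h : R -> R) (r : R) :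
  periodic1 h -> measurable_fun [set: R] h -> (forall x, (0 <= h x)%R) ->
  r \in Tset R -> \int[mu]_(x in Tset R) (h (x - r)%R)%:E = intT h.
Proof.
move=> hp mh h0; rewrite in_Tset => /andP[r1 r2].
have [r0|r0] := lerP r 0.
  by apply: ge0_integral_Tset_periodic1 => //; apply/andP; split; lra.
rewrite -(ge0_integral_Tset_periodic1 h (1 - r)%R hp mh h0); last first.
  by apply/andP; split; lra.
by apply: eq_integral => x _; rewrite -hp; congr (h _)%:E; lra.
Qed.

Lemma periodic1_shift_Tset {h : R -> R} {r : R} : periodic1 h -> r \in Tset R ->
  exists2 c, c \in Tset R & forall x, h (x - r)%R = h (x + c)%R.
Proof.
move=> hp; rewrite in_Tset => /andP[r1 r2].
have [->|rN] := eqVneq r (- (1/2))%R.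
  exists (- (1/2))%R; first by rewrite in_Tset; apply/andP; split; lra.
  by move=> x; rewrite -[RHS]hp; congr h; lra.
exists (- r)%R => //; rewrite in_Tset; apply/andP; split; first lra.
by rewrite ltrNl lt_neqAle eq_sym rN r1.
Qed.

Lemma le_integral_focused_shift (h hbar : R -> R) (r z : R) :
  periodic1 h -> measurable_fun [set: R] h -> (forall x, (0 <= h x)%R) ->
  more_focused hbar h -> r \in Tset R -> (0 <= z <= 1/2)%R ->
  \int[mu]_(x in `[(- z)%R, z]) (h (x - r)%R)%:E <=
  \int[mu]_(x in `[(- z)%R, z]) (hbar x)%:E.
Proof.
move=> hp mh h0 focus rT /andP[z0 z1].
have [c cT hc] := periodic1_shift_Tset hp rT.
under eq_integral do rewrite hc.
rewrite ge0_integral_itv_shift// (addrC (- z)%R) (addrC z).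
exact: focus.
Qed.

Lemma lebesgueR_set1 (a : R) : mu [set a] = 0.
Proof. exact: lebesgue_measure_set1. Qed.

Lemma le_integral_sandwich (S : set R) (z : R) (g hb : R -> R) :
  measurable S -> measurable_fun [set: R] g -> measurable_fun [set: R] hb ->
  (forall x, (0 <= g x)%R) -> (forall x, (0 <= hb x)%R) ->
  `](- z)%R, z[ `<=` S -> S `<=` `[(- z)%R, z] ->
  \int[mu]_(x in `[(- z)%R, z]) (g x)%:E <= \int[mu]_(x in `[(- z)%R, z]) (hb x)%:E ->
  \int[mu]_(x in S) (g x)%:E <= \int[mu]_(x in S) (hb x)%:E.
Proof.
move=> mS mg mhb g0 hb0 oS Sc gz.
have mgE : measurable_fun [set: R] (EFin \o g) by exact/measurable_EFinP.
have mhbE : measurable_fun [set: R] (EFin \o hb) by exact/measurable_EFinP.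
apply: le_trans (ge0_subset_integral _ _ _ (measurable_funS _ _ mgE) _ Sc) _ => //.
  by move=> x _; rewrite lee_fin.
apply: le_trans gz _.
have ends0 : mu ([set (- z)%R] `|` [set z]) = 0.
  apply/eqP; rewrite eq_le measure_ge0 andbT.
  apply: le_trans (measureU2 _ _ _) _ => //.
  by change (mu [set (- z)%R] + mu [set z] <= 0); rewrite !lebesgueR_set1 adde0.
have mends : measurable ([set (- z)%R] `|` [set z]) by apply: measurableU.
rewrite (ge0_negligible_integral mends _ (measurable_funS _ _ mhbE) _ ends0)//;
  last by move=> x _; rewrite lee_fin.
apply: ge0_subset_integral => //.
- exact: measurableD.
- exact: measurable_funS mhbE.
- by move=> x _; rewrite lee_fin.
move=> x [/=]; rewrite in_itv/= => /andP[x1 x2] xN; apply: oS => /=.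
rewrite in_itv/= !lt_neqAle x1 x2 !andbT.
by apply/andP; split; apply/eqP => xz; apply: xN; [left|right].
Qed.

Section Tset_superlevel.
Context {v : R -> R}.
Hypothesis v_norm :
  forall x y, Tset R x -> Tset R y -> (`|y| <= `|x|)%R -> (v x <= v y)%R.

Lemma is_interval_Tset_superlevel (t : R) :
  is_interval (Tset R `&` [set x | t < v x]%R).
Proof.
move=> x y [Tx vx] [Ty vy] w /andP[xw wy].
have Tw : Tset R w.
  by move: Tx Ty; rewrite !TsetE => /andP[x1 _] /andP[_ y2]; apply/andP; split; lra.
split=> //=; have [w0|w0] := lerP 0 w.
  by apply: lt_le_trans vy _; apply: v_norm; rewrite // !ger0_norm// (le_trans w0).
apply: lt_le_trans vx _; apply: v_norm; rewrite // !ltr0_norm ?lerN2//.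
exact: le_lt_trans xw w0.
Qed.

Lemma measurable_fun_Tset : measurable_fun (Tset R) v.
Proof.
apply: (measurability (@RGenOInfty.G R)) => [|/= _ [_] [t] -> <-].
  exact: RGenOInfty.measurableE.
apply: is_interval_measurable.
have -> : v @^-1` `]t, +oo[ = [set x | t < v x]%R.
  by apply/seteqP; split => x /=; rewrite in_itv/= andbT.
exact: is_interval_Tset_superlevel.
Qed.

Lemma Tset_superlevel_sandwich (t : R) :
  let S := Tset R `&` [set x | t < v x]%R in
  S = set0 \/
  exists2 z, (0 <= z <= 1/2)%R & `](- z)%R, z[ `<=` S /\ S `<=` `[(- z)%R, z].
Proof.
move=> S; have [->|/set0P [x0 Sx0]] := eqVneq S set0; [by left|right].
pose A := (fun x => `|x|%R) @` S.
have A_ub : ubound A (1/2)%R by move=> _ [x [Tx _] <-]; exact: Tset_norm_le.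
have A_sup : has_sup A by split; [exists `|x0|%R; exists x0|exists (1/2)%R].
exists (sup A).
  apply/andP; split; last exact: ge_sup A_sup.1 A_ub.
  by apply: le_trans (normr_ge0 x0) _; apply: sup_upper_bound => //; exists x0.
split=> [y|x Sx]; last by rewrite /= in_itv/= -ler_norml sup_upper_bound//; exists x.
rewrite /= in_itv/= => /andP[y1 y2].
have ylt : (0 < sup A - `|y|)%R by rewrite subr_gt0 ltr_norml y1.
have [_ [x Sx <-]] := sup_adherent ylt A_sup; rewrite opprB addrC subrK => yx.
have Ty : Tset R y.
  move: (lt_le_trans yx (Tset_norm_le x Sx.1)); rewrite TsetE ltr_norml.
  by move=> /andP[/ltW -> ->].
split=> //; apply: lt_le_trans Sx.2 _.
by apply: v_norm => //; [exact: Sx.1|exact: ltW].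
Qed.

Lemma le_integral_Tset_superlevel (g hb : R -> R) (t : R) :
  measurable_fun [set: R] g -> measurable_fun [set: R] hb ->
  (forall x, (0 <= g x)%R) -> (forall x, (0 <= hb x)%R) ->
  (forall z, (0 <= z <= 1/2)%R ->
    \int[mu]_(x in `[(- z)%R, z]) (g x)%:E <=
    \int[mu]_(x in `[(- z)%R, z]) (hb x)%:E) ->
  \int[mu]_(x in Tset R `&` [set x | t < v x]%R) (g x)%:E <=
  \int[mu]_(x in Tset R `&` [set x | t < v x]%R) (hb x)%:E.
Proof.
move=> mg mhb g0 hb0 ghb.
have [->|[z z12 [oS Sc]]] := Tset_superlevel_sandwich t.
  by rewrite !integral_set0.
apply: le_integral_sandwich oS Sc (ghb z z12) => //.
by apply: is_interval_measurable; exact: is_interval_Tset_superlevel.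
Qed.

Lemma le_integral_Tset_symmetric_decreasing (f g : R -> R) (M : R) :
  measurable_fun [set: R] f -> measurable_fun [set: R] g ->
  (forall x, (0 <= f x)%R) -> (forall x, (0 <= g x)%R) -> intT f < +oo ->
  (forall x, Tset R x -> 0 <= v x <= M)%R ->
  (forall z, (0 <= z <= 1/2)%R ->
    \int[mu]_(x in `[(- z)%R, z]) (f x)%:E <=
    \int[mu]_(x in `[(- z)%R, z]) (g x)%:E) ->
  \int[mu]_(x in Tset R) (f x * v x)%:E <= \int[mu]_(x in Tset R) (g x * v x)%:E.
Proof.
move=> mf mg f0 g0 fioo vM fg.
apply: (le_integral_superlevel _ measurable_Tset measurable_fun_Tset) vM _ => //.
- exact: measurable_funS mf.
- exact: measurable_funS mg.
by move=> t; exact: le_integral_Tset_superlevel.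
Qed.

End Tset_superlevel.

Lemma pdf_integrable {h : R -> R} : pdf h -> mu.-integrable (Tset R) (EFin \o h).
Proof.
move=> [_ mh h0 _ h1]; apply: ge0_integrable => //; last by rewrite -intTE h1 ltry.
exact: measurable_funS mh.
Qed.

Lemma pdf_shift {h : R -> R} {r : R} : pdf h -> r \in Tset R ->
  pdf (fun x => h (x - r)%R).
Proof.
move=> [hp mh h0 h2 h1] rT.
have h2p : periodic1 (fun x => h x ^+ 2)%R by move=> x; rewrite hp.
have mh2 : measurable_fun [set: R] (fun x => h x ^+ 2)%R by exact: measurable_funX.
split=> //.
- by move=> x; rewrite -[RHS]hp; congr h; lra.
- exact: measurableT_comp mh (measurable_shift _).
- have h20 x : (0 <= h x ^+ 2)%R by exact: sqr_ge0.
  by rewrite intTE (ge0_integral_Tset_periodic1_shift _ _ h2p mh2 h20 rT).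
- by rewrite intTE ge0_integral_Tset_periodic1_shift.
Qed.

End real_line.

Section symmetric_decreasing.
Context {R : realType} {u : R -> R}.
Hypothesis usd : symmetric_decreasing u.

Lemma symmetric_decreasing_le_norm x y :
  `|y| <= `|x| -> `|x| <= 1/2 -> u x <= u y.
Proof.
have [_ us ud] := usd; move=> yx x12.
have u_norm z : u z = u `|z|.
  by have [z0|z0] := lerP 0 z; [rewrite ger0_norm|rewrite ltr0_norm// -us].
by rewrite u_norm (u_norm y) ud.
Qed.

Lemma symmetric_decreasing_Tset_norm x y :
  Tset R x -> Tset R y -> `|y| <= `|x| -> u x <= u y.
Proof. by move=> /Tset_norm_le x12 _ yx; exact: symmetric_decreasing_le_norm. Qed.

Lemma symmetric_decreasing_Tset_bnd x : Tset R x -> u (1/2) <= u x <= u 0.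
Proof.
move=> /Tset_norm_le x12; have h12 : `|1/2 : R| = 1/2 by rewrite ger0_norm.
by apply/andP; split; apply: symmetric_decreasing_le_norm; rewrite ?normr0 ?h12.
Qed.

End symmetric_decreasing.

Theorem lemma2p13 (R : realType) (u h hbar : R -> R) :
  symmetric_decreasing u -> pdf h -> pdf hbar -> more_focused hbar h ->
  forall r : R, r \in Tset R ->
    (intT (fun x => (h (x - r) * u x)%R) <= intT (fun x => (hbar x * u x)%R))%E.
Proof.
move=> usd hpdf hbpdf focus r rT; pose m := u (1/2).
have [hp mh h0 _ _] := hpdf; have [_ mhb hb0 _ hb1] := hbpdf.
have fpdf := pdf_shift hpdf rT; have [_ mf f0 _ f1] := fpdf.
have u_norm := symmetric_decreasing_Tset_norm usd.
have u_bnd := symmetric_decreasing_Tset_bnd usd.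
rewrite !intTE !(integral_mul_offset _ measurable_Tset _ _ m _
  (measurable_fun_Tset u_norm) (bounded_between u_bnd)); last 2 first.
- exact: pdf_integrable hbpdf.
- exact: pdf_integrable fpdf.
rewrite -!intTE f1 hb1 leeD2r// !intTE.
apply: le_integral_Tset_symmetric_decreasing (u 0 - m) _ _ _ _ _ _ _ => //.
- by move=> x y Tx Ty yx; rewrite lerD2r u_norm.
- by rewrite f1 ltry.
- by move=> x /u_bnd /andP[um uM]; rewrite subr_ge0 um lerD2r.
by move=> z z12; exact: le_integral_focused_shift.
Qed.
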